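(* Let $V$ be a finite set, $\mu_1,\mu_2$ probability measures on $V$ and $\rho$ a coupling between them. Then $\rho$ is economic if and only if the flow $\sum_{x,y\in V,\,x\neq y}\rho(x,y)Q_{(x,y)}$ on the complete digraph on $V$ (edges all pairs $(x,y)$ with $x\ne y$) is acyclic.
   Context: A coupling is a probability measure $\rho$ on $V\times V$ with marginals $\mu_1,\mu_2$. A path from $x$ to $y$ is any sequence $(x_0,\dots,x_n)$ of elements of $V$ with $x_0=x$, $x_n=y$, $x_i\neq x_{i+1}$ (no constraint other than the endpoints). For such $\gamma$, $Q_\gamma(u,v)=1$ if $(u,v)=(x_i,x_{i+1})$ for some $i$ and $0$ otherwise; $Q_{(x,y)}$ is this for the one-edge path. A flow is a nonnegative function $Q$ on ordered pairs of distinct elements; $E(Q)=\{(u,v):Q(u,v)>0\}$; $Q$ is acyclic if $(V,E(Q))$ has no directed cycle. The coupling $\rho$ is economic if for each pair $x\neq y$ there exist finitely many paths $\gamma^i_{(x,y)}$ from $x$ to $y$ and weights $\rho^i(x,y)\ge0$ with $\sum_i\rho^i(x,y)=\rho(x,y)$ such that the flow $\sum_{x\neq y}\sum_i\rho^i(x,y)Q_{\gamma^i_{(x,y)}}$ is acyclic. *)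

From mathcomp Require Import all_boot all_order all_algebra.
Set Implicit Arguments. Unset Strict Implicit. Unset Printing Implicit Defensive.
Import Order.TTheory GRing.Theory Num.Theory.
Local Open Scope ring_scope.

Section Defs.
Variables (R : realFieldType) (V : finType).

Definition prob_measure (mu : V -> R) : Prop :=
  (forall v, 0 <= mu v) /\ \sum_(v : V) mu v = 1.

Definition coupling (mu1 mu2 : V -> R) (rho : V -> V -> R) : Prop :=
  (forall x y, 0 <= rho x y) /\
  (forall x, \sum_(y : V) rho x y = mu1 x) /\
  (forall y, \sum_(x : V) rho x y = mu2 y).

(* A path (x_0,...,x_n) from x to y is represented by x_0 = x and the
   sequence s = [:: x_1; ...; x_n]; it must satisfy x_i <> x_{i+1} and
   x_n = y. *)
Definition is_path (x y : V) (s : seq V) : bool :=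
  path (fun a b => a != b) x s && (last x s == y).

Definition Qpath (x : V) (s : seq V) (u v : V) : R :=
  if (u, v) \in zip (x :: s) s then 1 else 0.

Definition Qedge (x y : V) (u v : V) : R := Qpath x [:: y] u v.

Definition flow_edge (Q : V -> V -> R) (u v : V) : bool := (u != v) && (0 < Q u v).

Definition acyclic (Q : V -> V -> R) : Prop :=
  ~ exists (x : V) (s : seq V),
      [/\ s != [::], path (flow_edge Q) x s & last x s = x].

Definition economic (rho : V -> V -> R) : Prop :=
  exists D : V -> V -> seq (seq V * R),
    (forall x y, x != y ->
       (forall p, p \in D x y -> is_path x y p.1 /\ 0 <= p.2) /\
       \sum_(p <- D x y) p.2 = rho x y) /\
    acyclic (fun u v =>
      \sum_(x : V) \sum_(y : V | x != y) \sum_(p <- D x y) p.2 * Qpath x p.1 u v).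

End Defs.

From mathcomp Require Import all_boot all_order all_algebra.
Set Implicit Arguments. Unset Strict Implicit. Unset Printing Implicit Defensive.
Import Order.TTheory GRing.Theory Num.Theory.
Local Open Scope ring_scope.

(* If rho is economic, every edge (u, v) of the direct flow has rho(u,v) > 0,
   so some path of the decomposition of rho(u,v) has positive weight; that
   weight bounds the decomposed flow from below along the whole path.  Hence
   every edge of the direct flow is shadowed by a nonempty path of the
   decomposed flow with the same endpoints, and a directed cycle of the direct
   flow lifts to one of the decomposed flow.  Conversely, the one-edge paths
   weighted by rho form a decomposition whose flow is the direct flow. *)

Section Flows.
Variables (R : realFieldType) (V : finType).
Implicit Types (F G Q : V -> V -> R) (rho : V -> V -> R).

Lemma eq_acyclic F G : F =2 G -> acyclic F -> acyclic G.
Proof.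
move=> eqFG acF [x [s [s_nil s_path s_last]]]; apply: acF; exists x, s.
by split=> //; rewrite (eq_path (e' := flow_edge G)) // => a b; rewrite /flow_edge eqFG.
Qed.

Lemma acyclic_refine F G :
  (forall u v, flow_edge F u v ->
     exists t, [/\ t != [::], path (flow_edge G) u t & last u t = v]) ->
  acyclic G -> acyclic F.
Proof.
move=> refine acG [x [s [s_nil s_path s_last]]]; apply: acG.
have lift y (r : seq V) : path (flow_edge F) y r ->
    exists t, [/\ r != [::] -> t != [::], path (flow_edge G) y t & last y t = last y r].
  elim: r y => [|z r IH] y /=; first by exists [::].
  case/andP=> /refine[t1 [t1_nil t1_path t1_last]] /IH[t2 [_ t2_path t2_last]].
  exists (t1 ++ t2); split.
  - by move=> _; case: (t1) t1_nil.
  - by rewrite cat_path t1_path t1_last.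
  - by rewrite last_cat t1_last.
have [t [t_nil t_path t_last]] := lift x s s_path.
by exists x, t; split; [exact: t_nil | | rewrite t_last].
Qed.

Lemma flow_edge_path Q x s :
  path (fun a b => a != b) x s ->
  (forall a b, (a, b) \in zip (x :: s) s -> 0 < Q a b) ->
  path (flow_edge Q) x s.
Proof.
elim: s x => [//|y s IH] x /= /andP[xy s_path] Qpos.
rewrite /flow_edge xy Qpos ?mem_head //=; apply: IH => // a b ab.
by apply: Qpos; rewrite in_cons ab orbT.
Qed.

Lemma Qpath_ge0 x s u v : 0 <= @Qpath R V x s u v.
Proof. by rewrite /Qpath; case: ifP. Qed.

Lemma QedgeE x y u v : @Qedge R V x y u v = if (x == u) && (y == v) then 1 else 0.
Proof. by rewrite /Qedge /Qpath /= mem_seq1 xpair_eqE [u == x]eq_sym [v == y]eq_sym. Qed.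

Lemma direct_flowE rho u v : u != v ->
  \sum_(x : V) \sum_(y : V | x != y) rho x y * @Qedge R V x y u v = rho u v.
Proof.
move=> uv; rewrite (bigD1 u) //= [X in _ + X]big1 ?addr0; last first.
  by move=> x xu; apply: big1 => y _; rewrite QedgeE (negbTE xu) mulr0.
rewrite (bigD1 v) //= [X in _ + X]big1 ?addr0; first by rewrite QedgeE !eqxx mulr1.
by move=> y /andP[_ yv]; rewrite QedgeE eqxx (negbTE yv) mulr0.
Qed.

Lemma economic_of_acyclic rho : (forall x y, 0 <= rho x y) ->
  acyclic (fun u v => \sum_(x : V) \sum_(y : V | x != y) rho x y * @Qedge R V x y u v) ->
  economic rho.
Proof.
move=> rho_ge0 acyclic_direct; exists (fun x y => [:: ([:: y], rho x y)]); split.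
  move=> x y xy; rewrite big_seq1; split=> // p; rewrite mem_seq1 => /eqP -> /=.
  by rewrite /is_path /= xy eqxx.
apply: eq_acyclic acyclic_direct => u v; apply: eq_bigr => x _.
by apply: eq_bigr => y _; rewrite big_seq1.
Qed.

Section Decomposition.
Variable D : V -> V -> seq (seq V * R).
Hypothesis D_ge0 : forall x y p, x != y -> p \in D x y -> 0 <= p.2.

Definition decomposition_flow (u v : V) : R :=
  \sum_(x : V) \sum_(y : V | x != y) \sum_(p <- D x y) p.2 * @Qpath R V x p.1 u v.

Lemma decomposition_term_ge0 x y u v : x != y ->
  0 <= \sum_(p <- D x y) p.2 * @Qpath R V x p.1 u v.
Proof.
move=> xy; rewrite big_seq; apply: sumr_ge0 => p pD.
by apply: mulr_ge0; [exact: D_ge0 xy pD | exact: Qpath_ge0].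
Qed.

Lemma weight_le_decomposition_flow x y p a b : x != y -> p \in D x y ->
  (a, b) \in zip (x :: p.1) p.1 -> p.2 <= decomposition_flow a b.
Proof.
move=> xy pD ab; rewrite /decomposition_flow (bigD1 x) //= (bigD1 y) //=.
rewrite (big_rem p) //= {1}/Qpath ab mulr1 -!addrA lerDl.
rewrite !addr_ge0 //.
- rewrite big_seq; apply: sumr_ge0 => q /mem_rem qD.
  by apply: mulr_ge0; [exact: D_ge0 xy qD | exact: Qpath_ge0].
- by apply: sumr_ge0 => z /andP[xz _]; exact: decomposition_term_ge0.
- by apply: sumr_ge0 => z _; apply: sumr_ge0 => w; exact: decomposition_term_ge0.
Qed.

Lemma positive_weight_path u v : u != v ->
  (forall p, p \in D u v -> is_path u v p.1) ->
  0 < \sum_(p <- D u v) p.2 ->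
  exists t, [/\ t != [::], path (flow_edge decomposition_flow) u t & last u t = v].
Proof.
move=> uv D_path sum_gt0.
have : \sum_(p <- D u v | p \in D u v) p.2 != 0 by rewrite -big_seq lt0r_neq0.
rewrite psumr_neq0; last by move=> p; exact: D_ge0.
case/hasP=> p pD /andP[_ p_gt0]; have /andP[p_path /eqP p_last] := D_path p pD.
exists p.1; split=> //.
  by apply: contra_neq uv => p_nil; rewrite -p_last p_nil.
apply: flow_edge_path => // a b ab.
exact: lt_le_trans p_gt0 (weight_le_decomposition_flow uv pD ab).
Qed.

End Decomposition.

Lemma acyclic_of_economic rho : economic rho ->
  acyclic (fun u v => \sum_(x : V) \sum_(y : V | x != y) rho x y * @Qedge R V x y u v).
Proof.
case=> D [D_decomp acyclic_D].
have D_ge0 x y p : x != y -> p \in D x y -> 0 <= p.2.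
  by move=> xy pD; case: ((D_decomp x y xy).1 p pD).
apply: acyclic_refine acyclic_D => u v /andP[uv]; rewrite direct_flowE //.
have [D_path <-] := D_decomp u v uv.
by apply: positive_weight_path => // p pD; case: (D_path p pD).
Qed.

End Flows.

Theorem lemma3p1 (R : realFieldType) (V : finType) (mu1 mu2 : V -> R)
  (rho : V -> V -> R) :
  prob_measure mu1 -> prob_measure mu2 -> coupling mu1 mu2 rho ->
  (economic rho <->
   acyclic (fun u v => \sum_(x : V) \sum_(y : V | x != y) rho x y * @Qedge R V x y u v)).
Proof.
move=> _ _ [rho_ge0 _]; split; first exact: acyclic_of_economic.
exact: economic_of_acyclic.
Qed.
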